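(* Let $T_{init}$ be the number of nodes of the initial tree. The expected optimization time of SMO-GP-single and of SMO-GP-multi on MO-ORDER is $O(n\,T_{init}+n^2\log n)$.
   Context: Fix an integer $n\ge 1$; the terminal set is $T=\{x_1,\bar x_1,\dots,x_n,\bar x_n\}$ ($\bar x_i$ the complement of $x_i$). A syntax tree is either the empty tree or a rooted ordered binary tree whose inner nodes are all labelled by the binary function $J$ (join, exactly two ordered children) and whose leaves are labelled by elements of $T$. The complexity $C(X)$ is the number of nodes of $X$ (0 for the empty tree). The leaf list $l$ of $X$ is the sequence of leaf labels in inorder. ORDER: build a list $S$ by scanning $l$ front to rear and appending a literal only if neither it nor its complement is already in $S$; ORDER$(X)$ is the number of positive literals $x_i$ in $S$. MO-ORDER$(X)=(\mathrm{ORDER}(X),C(X))$, ORDER maximized, $C$ minimized. Mutation (HVL-Prime applied $k$ times): each application chooses uniformly at random one of three operations. Substitute: replace a uniformly random leaf by a uniformly random $u\in T$. Insert: choose a uniformly random node $v$ and uniformly random $u\in T$, replace $v$ by a $J$-node with children $u$ and $v$ in uniformly random order (inserting into the empty tree yields the single leaf $u$). Delete: choose a uniformly random leaf $v$ with parent $p$ and sibling $u$, replace $p$ by $u$ (deleting $p$ and $v$; deleting the only leaf of a one-leaf tree yields the empty tree). For single-operation mutation $k=1$; for multi-operation mutation $k=1+\mathrm{Pois}(1)$ with $\mathrm{Pois}(1)$ Poisson with mean 1. Dominance for MO-$F$: $Y\succeq X$ iff $F(Y)\ge F(X)$ and $C(Y)\le C(X)$; $Y\succ X$ iff $Y\succeq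 X$ and ($F(Y)>F(X)$ or $C(Y)<C(X)$). A tree is Pareto optimal if no tree dominates it; the Pareto front is the set of objective vectors of Pareto optimal trees. SMO-GP: choose an initial tree $X$ and set $P:=\{X\}$; repeat: choose $X\in P$ uniformly at random, let $Y$ be a mutated copy of $X$; if no $Z\in P$ satisfies $Z\succ Y$, set $P:=(P\setminus\{Z\in P: Y\succeq Z\})\cup\{Y\}$. SMO-GP-single uses single-operation, SMO-GP-multi multi-operation mutation. Expected optimization time: expected number of iterations until the population contains, for every objective vector in the Pareto front, a tree with that objective vector. *)

From Stdlib Require Import Reals List Arith Bool ClassicalEpsilon.
Import ListNotations.
Open Scope R_scope.

(* A literal (i, true) is x_{i+1}, (i, false) is its complement; indices 0..n-1. *)
Definition lit : Type := (nat * bool)%type.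
Definition compl (x : lit) : lit := (fst x, negb (snd x)).
Definition lit_eqb (x y : lit) : bool := Nat.eqb (fst x) (fst y) && Bool.eqb (snd x) (snd y).

Definition terminals (n : nat) : list lit :=
  flat_map (fun i => [(i, true); (i, false)]) (seq 0 n).

Inductive ntree : Type :=
| Leaf : lit -> ntree
| J : ntree -> ntree -> ntree.

(* a syntax tree is either empty (None) or a nonempty tree *)
Definition tree : Type := option ntree.

Fixpoint nleaves (t : ntree) : list lit :=
  match t with Leaf l => [l] | J a b => nleaves a ++ nleaves b end.

Definition leaf_list (X : tree) : list lit :=
  match X with None => [] | Some t => nleaves t end.

Fixpoint nsize (t : ntree) : nat :=
  match t with Leaf _ => 1%nat | J a b => S (nsize a + nsize b) end.

Definition cplx (X : tree) : nat := match X with None => 0%nat | Some t => nsize t end.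

Definition valid_tree (n : nat) (X : tree) : Prop :=
  forall l, In l (leaf_list X) -> In l (terminals n).

Fixpoint order_scan (S : list lit) (l : list lit) : list lit :=
  match l with
  | [] => S
  | x :: l' =>
      if existsb (fun y => lit_eqb y x || lit_eqb y (compl x)) S
      then order_scan S l'
      else order_scan (S ++ [x]) l'
  end.

Definition ORDER (X : tree) : nat :=
  length (filter (fun x : lit => snd x) (order_scan [] (leaf_list X))).

Definition wdom (Y X : tree) : bool :=
  Nat.leb (ORDER X) (ORDER Y) && Nat.leb (cplx Y) (cplx X).
Definition sdom (Y X : tree) : bool :=
  wdom Y X && (Nat.ltb (ORDER X) (ORDER Y) || Nat.ltb (cplx Y) (cplx X)).

Definition pareto_optimal (n : nat) (Y : tree) : Prop :=
  valid_tree n Y /\ forall Z, valid_tree n Z -> sdom Z Y = false.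

Definition covers_front (n : nat) (P : list tree) : Prop :=
  forall Y, pareto_optimal n Y ->
    exists Z, In Z P /\ ORDER Z = ORDER Y /\ cplx Z = cplx Y.

Definition dist (A : Type) : Type := list (R * A).
Definition uniform {A} (l : list A) : dist A :=
  map (fun x => (/ INR (length l), x)) l.
Definition scale {A} (p : R) (d : dist A) : dist A :=
  map (fun px => (p * fst px, snd px)) d.
Definition dbind {A B} (d : dist A) (f : A -> dist B) : dist B :=
  flat_map (fun px => scale (fst px) (f (snd px))) d.
Definition expect {A} (d : dist A) (g : A -> R) : R :=
  fold_right (fun px acc => fst px * g (snd px) + acc) 0 d.

Fixpoint subst_all (u : lit) (t : ntree) : list ntree :=
  match t with
  | Leaf _ => [Leaf u]
  | J a b => map (fun a' => J a' b) (subst_all u a) ++ map (fun b' => J a b') (subst_all u b)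
  end.

Fixpoint ins_all (u : lit) (t : ntree) : list ntree :=
  J (Leaf u) t :: J t (Leaf u) ::
  match t with
  | Leaf _ => []
  | J a b => map (fun a' => J a' b) (ins_all u a) ++ map (fun b' => J a b') (ins_all u b)
  end.

Fixpoint del_all (t : ntree) : list tree :=
  match t with
  | Leaf _ => [None]
  | J a b =>
      map (fun o => match o with None => Some b | Some a' => Some (J a' b) end) (del_all a) ++
      map (fun o => match o with None => Some a | Some b' => Some (J a b') end) (del_all b)
  end.

Definition substitute_outcomes (n : nat) (X : tree) : list tree :=
  match X with
  | None => [None]   (* no leaf to substitute: tree unchanged *)
  | Some t => flat_map (fun u => map Some (subst_all u t)) (terminals n)
  end.
Definition insert_outcomes (n : nat) (X : tree) : list tree :=
  match X with
  | None => map (fun u => Some (Leaf u)) (terminals n)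
  | Some t => flat_map (fun u => map Some (ins_all u t)) (terminals n)
  end.
Definition delete_outcomes (X : tree) : list tree :=
  match X with
  | None => [None]   (* no leaf to delete: tree unchanged *)
  | Some t => del_all t
  end.

Definition hvl_prime (n : nat) (X : tree) : dist tree :=
  scale (1/3) (uniform (substitute_outcomes n X)) ++
  scale (1/3) (uniform (insert_outcomes n X)) ++
  scale (1/3) (uniform (delete_outcomes X)).

Fixpoint hvl_iter (n k : nat) (X : tree) : dist tree :=
  match k with
  | O => [(1, X)]
  | S k' => dbind (hvl_prime n X) (hvl_iter n k')
  end.

(* value of a (convergent) series, chosen classically *)
Definition series (f : nat -> R) : R :=
  epsilon (inhabits 0) (fun l => infinite_sum f l).

(* Expectation operator of a mutation: mutE X g = E[g(Y)], Y mutated copy of X *)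
Definition single_mut (n : nat) (X : tree) (g : tree -> R) : R :=
  expect (hvl_iter n 1 X) g.
(* k = 1 + Pois(1), P(Pois(1) = j) = e^{-1}/j! *)
Definition multi_mut (n : nat) (X : tree) (g : tree -> R) : R :=
  series (fun j => exp (-1) / INR (fact j) * expect (hvl_iter n (S j) X) g).

Inductive algorithm : Type := SMO_GP_single | SMO_GP_multi.

Definition mutation (alg : algorithm) : nat -> tree -> (tree -> R) -> R :=
  match alg with SMO_GP_single => single_mut | SMO_GP_multi => multi_mut end.

Definition smo_update (P : list tree) (Y : tree) : list tree :=
  if existsb (fun Z => sdom Z Y) P then P
  else filter (fun Z => negb (wdom Y Z)) P ++ [Y].

Definition sumR {A} (f : A -> R) (l : list A) : R := fold_right (fun x acc => f x + acc) 0 l.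

(* surv alg n t P = probability that, starting from population P, the population
   does not yet cover the Pareto front after t iterations  (= P(T > t)) *)
Fixpoint surv (alg : algorithm) (n : nat) (t : nat) (P : list tree) : R :=
  if excluded_middle_informative (covers_front n P) then 0 else
  match t with
  | O => 1
  | S t' => / INR (length P) *
            sumR (fun X => mutation alg n X (fun Y => surv alg n t' (smo_update P Y))) P
  end.

(* the expected optimization time from initial tree X0 is the sum over t >= 0 of
   P(T > t) = surv alg n t [X0] *)
Definition expected_time_is (alg : algorithm) (n : nat) (X0 : tree) (E : R) : Prop :=
  infinite_sum (fun t => surv alg n t [X0]) E.

(* The Pareto front of MO-ORDER consists of the objective vectors (k, 2k-1), 0 <= k <= n:
   a tree of ORDER k has at least k leaves, hence at least 2k-1 nodes, and the combs
   x_1 ... x_k attain this bound.  The proof is an additive-drift argument on the potential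
     phase 1 (empty tree missing):  V(P) = A * (least complexity in P) + sum_{m<n} D_m,
     phase 2 (empty tree present):  V(P) = sum of D_m over the levels m+1 not yet reached,
   with A = 3(n+1)/q, D_m = 6n(n+1)/(q(n-m)), and q the probability that mutation performs
   exactly one HVL-Prime step (q = 1, resp. e^{-1} >= 1/3).  The potential never increases;
   in phase 1 deleting a leaf of a smallest tree (probability >= q/3) lowers it by A, in
   phase 2 inserting a fresh positive literal into the front tree of ORDER m (probability
   >= q(n-m)/(6n)) lowers it by D_m.  As the population has at most n+1 trees, V drops by
   at least 1 in expectation per iteration, so E[T] <= V({X0}) = O(n C(X0) + n^2 H_n). *)

From Pilot Require Import Defs.
From Stdlib Require Import Reals Lra Lia List Arith Bool ClassicalEpsilon.
Import ListNotations.
Open Scope R_scope.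

Lemma sumR_app {A} (l1 l2 : list A) f : sumR f (l1 ++ l2) = sumR f l1 + sumR f l2.
Proof. induction l1; simpl; [lra | rewrite IHl1; lra]. Qed.

Lemma sumR_map {A B} (f : B -> R) (h : A -> B) l : sumR f (map h l) = sumR (fun x => f (h x)) l.
Proof. induction l; simpl; auto. rewrite IHl; auto. Qed.

Lemma sumR_flat_map {A B} (f : B -> R) (h : A -> list B) l :
  sumR f (flat_map h l) = sumR (fun x => sumR f (h x)) l.
Proof. induction l; simpl; auto. rewrite sumR_app, IHl; auto. Qed.

Lemma sumR_const {A} (l : list A) c : sumR (fun _ => c) l = INR (length l) * c.
Proof. induction l; simpl; [lra | rewrite IHl; destruct (length l); simpl; lra]. Qed.

Lemma sumR_plus {A} (l : list A) f g : sumR (fun x => f x + g x) l = sumR f l + sumR g l.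
Proof. induction l; simpl; [lra | rewrite IHl; lra]. Qed.

Lemma sumR_scal {A} (l : list A) c f : sumR (fun x => c * f x) l = c * sumR f l.
Proof. induction l; simpl; [lra | rewrite IHl; lra]. Qed.

Lemma sumR_mono {A} (l : list A) f g :
  (forall x, In x l -> f x <= g x) -> sumR f l <= sumR g l.
Proof.
  induction l as [|a l IH]; simpl; intros H; [lra|].
  specialize (IH (fun x Hx => H x (or_intror Hx))). specialize (H a (or_introl eq_refl)). lra.
Qed.

Lemma sumR_ext {A} (l : list A) f g : (forall x, In x l -> f x = g x) -> sumR f l = sumR g l.
Proof. intros H; apply Rle_antisym; apply sumR_mono; intros x Hx; rewrite H; auto; lra. Qed.

Lemma sumR_nonneg {A} (l : list A) f : (forall x, In x l -> 0 <= f x) -> 0 <= sumR f l.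
Proof. intros H. rewrite <- (Rmult_0_r (INR (length l))), <- sumR_const. apply sumR_mono; auto. Qed.

Lemma sumR_mono_slack {A} (l : list A) f g x0 d :
  In x0 l -> (forall x, In x l -> f x <= g x) -> f x0 + d <= g x0 -> sumR f l + d <= sumR g l.
Proof.
  intros Hin H H0. apply in_split in Hin. destruct Hin as [l1 [l2 ->]]. rewrite !sumR_app. simpl.
  assert (sumR f l1 <= sumR g l1) by (apply sumR_mono; intros; apply H, in_or_app; auto).
  assert (sumR f l2 <= sumR g l2) by (apply sumR_mono; intros; apply H, in_or_app; simpl; auto).
  lra.
Qed.

Lemma average_bound {A} (l : list A) (f : A -> R) B : l <> [] ->
  (forall x, In x l -> 0 <= f x <= B) -> 0 <= / INR (length l) * sumR f l <= B.
Proof.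
  intros Hl H. assert (HL : 0 < INR (length l)) by (destruct l; [congruence | apply lt_0_INR; simpl; lia]).
  assert (0 <= sumR f l) by (apply sumR_nonneg; intros; apply H; auto).
  assert (sumR f l <= INR (length l) * B)
    by (rewrite <- sumR_const; apply sumR_mono; intros; apply H; auto).
  split. apply Rmult_le_pos; auto. left; apply Rinv_0_lt_compat; auto.
  apply Rmult_le_reg_l with (INR (length l)); auto. rewrite <- Rmult_assoc, Rinv_r by lra. lra.
Qed.

Lemma expect_app {A} (d1 d2 : Defs.dist A) g : expect (d1 ++ d2) g = expect d1 g + expect d2 g.
Proof. induction d1 as [|[p x] d IH]; simpl; [lra | rewrite IH; lra]. Qed.

Lemma expect_scale {A} p (d : Defs.dist A) g : expect (scale p d) g = p * expect d g.
Proof. induction d as [|[q x] d IH]; simpl in *; [lra | rewrite IH; lra]. Qed.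

Lemma expect_dbind {A B} (d : Defs.dist A) (f : A -> Defs.dist B) g :
  expect (dbind d f) g = expect d (fun x => expect (f x) g).
Proof. induction d as [|[q x] d IH]; simpl; [lra | rewrite expect_app, expect_scale, IH; auto]. Qed.

Lemma expect_ext {A} (d : Defs.dist A) f g : (forall x, f x = g x) -> expect d f = expect d g.
Proof. intros H; induction d as [|[p x] d IH]; simpl; auto. rewrite IH, H; auto. Qed.

Lemma expect_plus {A} (d : Defs.dist A) g h :
  expect d (fun x => g x + h x) = expect d g + expect d h.
Proof. induction d as [|[q x] d IH]; simpl; [lra | rewrite IH; lra]. Qed.

Lemma expect_mult {A} (d : Defs.dist A) c g : expect d (fun x => c * g x) = c * expect d g.
Proof. induction d as [|[q x] d IH]; simpl; [lra | rewrite IH; lra]. Qed.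

Lemma expect_const {A} (d : Defs.dist A) c : expect d (fun _ => c) = c * expect d (fun _ => 1).
Proof. induction d as [|[q x] d IH]; simpl; [lra | rewrite IH; lra]. Qed.

Lemma expect_uniform {A} (l : list A) g : expect (uniform l) g = / INR (length l) * sumR g l.
Proof.
  unfold uniform. generalize (/ INR (length l)). intros c.
  induction l; simpl; [lra | rewrite IHl; lra].
Qed.

Definition supported {A} (Q : A -> Prop) (d : Defs.dist A) : Prop :=
  Forall (fun px => 0 <= fst px /\ Q (snd px)) d.

Lemma expect_mono {A} (Q : A -> Prop) (d : Defs.dist A) g h :
  supported Q d -> (forall x, Q x -> g x <= h x) -> expect d g <= expect d h.
Proof.
  intros Hd Hg; induction Hd as [|[q x] d [H1 H2] _ IH]; simpl in *; [lra|].
  specialize (Hg x H2). nra.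
Qed.

Lemma expect_nonneg {A} (Q : A -> Prop) (d : Defs.dist A) g :
  supported Q d -> (forall x, Q x -> 0 <= g x) -> 0 <= expect d g.
Proof.
  intros Hd Hg. replace 0 with (expect d (fun _ => 0)) by (rewrite expect_const; lra).
  apply (expect_mono Q); auto.
Qed.

Lemma supported_app {A} Q (d1 d2 : Defs.dist A) :
  supported Q d1 -> supported Q d2 -> supported Q (d1 ++ d2).
Proof. intros; apply Forall_app; auto. Qed.

Lemma supported_scale {A} Q p (d : Defs.dist A) : 0 <= p -> supported Q d -> supported Q (scale p d).
Proof.
  intros Hp Hd; induction Hd as [|[q x] d [H1 H2] _ IH]; simpl; constructor; auto.
  simpl in *; split; [nra | auto].
Qed.

Lemma supported_dbind {A B} (QA : A -> Prop) (QB : B -> Prop) d f :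
  supported QA d -> (forall x, QA x -> supported QB (f x)) -> supported QB (dbind d f).
Proof.
  intros Hd Hf; induction Hd as [|[q x] d [H1 H2] _ IH]; simpl; [constructor|].
  apply supported_app; auto. apply supported_scale; auto.
Qed.

Lemma supported_uniform {A} (Q : A -> Prop) l :
  (forall x, In x l -> Q x) -> supported Q (uniform l).
Proof.
  intros H. apply Forall_forall. intros [p x] Hin. apply in_map_iff in Hin.
  destruct Hin as [y [E Hy]]. inversion E; subst. split; auto. apply Rlt_le, Rinv_0_lt_compat.
  destruct l; [contradiction | apply lt_0_INR; simpl; lia].
Qed.

Lemma uniform_mass {A} (l : list A) : l <> [] -> expect (uniform l) (fun _ => 1) = 1.
Proof.
  intros H. rewrite expect_uniform, sumR_const. destruct l; [congruence|].
  field. apply not_0_INR. simpl; lia.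
Qed.

Lemma uniform_nonneg {A} (l : list A) g : (forall x, 0 <= g x) -> 0 <= expect (uniform l) g.
Proof. intros H. apply (expect_nonneg (fun _ => True)); auto. apply supported_uniform; auto. Qed.

(** * The ORDER objective *)

(* [seen S x]: the variable of literal [x] already occurs in the scanned list [S];
   this is exactly the test performed by [order_scan]. *)
Definition vars (l : list lit) : list nat := map fst l.
Definition seen (S : list lit) (x : lit) : bool := existsb (fun y => Nat.eqb (fst y) (fst x)) S.

Lemma order_scan_cons S x l :
  order_scan S (x :: l) = if seen S x then order_scan S l else order_scan (S ++ [x]) l.
Proof.
  simpl. replace (existsb _ S) with (seen S x); auto. unfold seen.
  induction S as [|[i b] S IH]; simpl; auto. rewrite IH. f_equal.
  destruct x as [j c]; unfold lit_eqb, compl; simpl. destruct (Nat.eqb i j), b, c; reflexivity.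
Qed.

Lemma seen_false S x : seen S x = false <-> ~ In (fst x) (vars S).
Proof.
  unfold seen, vars. induction S as [|y S IH]; simpl. tauto.
  rewrite orb_false_iff, IH, Nat.eqb_neq. intuition.
Qed.

Lemma seen_app S1 S2 x : seen (S1 ++ S2) x = seen S1 x || seen S2 x.
Proof. apply existsb_app. Qed.

Definition order_count (S l : list lit) : nat := length (filter snd (order_scan S l)).
Definition positive_bit (x : lit) : nat := if snd x then 1%nat else 0%nat.

Lemma ORDER_count X : ORDER X = order_count [] (leaf_list X).
Proof. reflexivity. Qed.

Lemma order_count_scanned_fresh x l : forall S1 S2, ~ In (fst x) (vars l) ->
  order_count (S1 ++ x :: S2) l = (order_count (S1 ++ S2) l + positive_bit x)%nat.
Proof.
  induction l as [|y l IH]; intros S1 S2 H.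
  - unfold order_count; simpl. rewrite !filter_app, !length_app. simpl.
    unfold positive_bit. destruct (snd x); simpl; lia.
  - unfold order_count in *. rewrite !order_scan_cons.
    assert (E : seen (S1 ++ x :: S2) y = seen (S1 ++ S2) y).
    { rewrite !seen_app. f_equal. unfold seen; simpl.
      assert (Hxy : fst x <> fst y) by (intro E; apply H; simpl; auto).
      apply Nat.eqb_neq in Hxy. rewrite Hxy. reflexivity. }
    rewrite E. assert (H' : ~ In (fst x) (vars l)) by (intro; apply H; simpl; auto).
    destruct (seen (S1 ++ S2) y). apply IH; auto.
    rewrite <- !app_assoc. simpl. apply (IH S1 (S2 ++ [y])); auto.
Qed.

Lemma order_count_insert_fresh x l2 : forall l1 S, ~ In (fst x) (vars (S ++ l1 ++ l2)) ->
  order_count S (l1 ++ x :: l2) = (order_count S (l1 ++ l2) + positive_bit x)%nat.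
Proof.
  unfold vars; induction l1 as [|y l1 IH]; intros S H; simpl.
  - unfold order_count. rewrite order_scan_cons.
    assert (Hs : seen S x = false).
    { apply seen_false. intro; apply H. rewrite map_app; apply in_or_app; auto. }
    rewrite Hs. pose proof (order_count_scanned_fresh x l2 S []) as E.
    rewrite app_nil_r in E. apply E. intro; apply H. rewrite map_app; apply in_or_app; auto.
  - unfold order_count in *. rewrite !order_scan_cons. destruct (seen S y); apply IH.
    + intro Hin; apply H. rewrite !map_app in *. simpl.
      apply in_app_or in Hin. destruct Hin; apply in_or_app; auto. right; simpl; auto.
    + rewrite <- app_assoc. exact H.
Qed.

Lemma order_scan_nodup l : forall S, NoDup (vars S) -> NoDup (vars (order_scan S l)).
Proof.
  induction l as [|x l IH]; intros S H; auto. rewrite order_scan_cons.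
  destruct (seen S x) eqn:E; apply IH; auto. unfold vars; rewrite map_app.
  apply NoDup_app; [exact H | repeat constructor; intros [] |].
  intros i Hi [<- | []]. apply seen_false in E. contradiction.
Qed.

Lemma order_scan_in l : forall S z, In z (order_scan S l) -> In z S \/ In z l.
Proof.
  induction l as [|x l IH]; intros S z H; [simpl in H; auto|]. rewrite order_scan_cons in H.
  destruct (seen S x); apply IH in H; destruct H as [H|H]; simpl; auto.
  apply in_app_or in H. destruct H as [H|[H|[]]]; auto.
Qed.

Lemma order_scan_length l : forall S, (length (order_scan S l) <= length S + length l)%nat.
Proof.
  induction l as [|x l IH]; intros S; [simpl; lia|]. rewrite order_scan_cons. simpl length.
  destruct (seen S x). specialize (IH S); lia.
  specialize (IH (S ++ [x])). rewrite length_app in IH; simpl in IH; lia.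
Qed.

Lemma nleaves_length t : (2 * length (nleaves t) = nsize t + 1)%nat.
Proof. induction t; simpl; auto. rewrite length_app. lia. Qed.

(* ORDER counts distinct leaves, and a tree with k leaves has 2k-1 nodes:
   this is why the front points are (k, 2k-1). *)
Lemma ORDER_cplx X : (2 * ORDER X <= cplx X + 1)%nat /\ (ORDER X <= cplx X)%nat.
Proof.
  assert (H : (ORDER X <= length (leaf_list X))%nat).
  { eapply Nat.le_trans. apply filter_length_le. apply (order_scan_length _ []). }
  destruct X as [t|]; simpl in *; [|lia]. pose proof (nleaves_length t). lia.
Qed.

Lemma in_terminals n x : In x (terminals n) <-> (fst x < n)%nat.
Proof.
  unfold terminals. rewrite in_flat_map. split.
  - intros [i [Hi Hx]]. apply in_seq in Hi. simpl in Hx. destruct Hx as [<-|[<-|[]]]; simpl; lia.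
  - intros H. exists (fst x). split. apply in_seq; lia. destruct x as [i [|]]; simpl; auto.
Qed.

Lemma NoDup_map_filter {A B} (f : A -> B) (p : A -> bool) l :
  NoDup (map f l) -> NoDup (map f (filter p l)).
Proof.
  induction l; simpl; intros H; auto. inversion H; subst. destruct (p a); simpl; auto.
  constructor; auto. intro Hin. apply H2. apply in_map_iff in Hin. destruct Hin as [y [E Hy]].
  apply filter_In in Hy. apply in_map_iff. exists y; intuition.
Qed.

Lemma ORDER_le_n n X : valid_tree n X -> (ORDER X <= n)%nat.
Proof.
  intros HV. unfold ORDER. pose proof (order_scan_nodup (leaf_list X) [] (NoDup_nil _)) as ND0.
  pose proof (order_scan_in (leaf_list X) []) as HL.
  set (L := order_scan [] (leaf_list X)) in *.
  assert (H : (length (vars (filter snd L)) <= length (seq 0 n))%nat).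
  { apply NoDup_incl_length; [apply NoDup_map_filter; exact ND0|].
    intros i Hi. apply in_map_iff in Hi. destruct Hi as [x [<- Hx]].
    apply filter_In in Hx. destruct Hx as [Hx _]. apply HL in Hx. destruct Hx as [[]|Hx].
    apply HV, in_terminals in Hx. apply in_seq. lia. }
  unfold vars in H. rewrite length_map, length_seq in H. exact H.
Qed.

(* The comb x_1 x_2 ... x_{j+1}: a tree of ORDER j+1 with 2(j+1)-1 nodes. *)
Fixpoint positive_comb (j : nat) : ntree :=
  match j with O => Leaf (0%nat, true) | S j' => J (positive_comb j') (Leaf (S j', true)) end.

Lemma positive_comb_leaves j : nleaves (positive_comb j) = map (fun i => (i, true)) (seq 0 (S j)).
Proof.
  induction j. reflexivity.
  cbn [positive_comb nleaves]. rewrite IHj, (seq_S (S j) 0), map_app. reflexivity.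
Qed.

Lemma positive_comb_spec n j : (j < n)%nat ->
  valid_tree n (Some (positive_comb j)) /\ ORDER (Some (positive_comb j)) = S j /\
  cplx (Some (positive_comb j)) = (2 * S j - 1)%nat.
Proof.
  intros Hj. split; [|split].
  - intros l Hl. simpl in Hl. rewrite positive_comb_leaves in Hl. apply in_map_iff in Hl.
    destruct Hl as [i [<- Hi]]. apply in_terminals. apply in_seq in Hi. simpl. lia.
  - clear Hj. induction j. reflexivity. rewrite ORDER_count in *.
    cbn [leaf_list positive_comb nleaves] in *.
    pose proof (order_count_insert_fresh (S j, true) [] (nleaves (positive_comb j)) []) as Hins.
    rewrite app_nil_r in Hins. etransitivity; [apply Hins|].
    + simpl. rewrite positive_comb_leaves. unfold vars. rewrite map_map, map_id, in_seq. simpl. lia.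
    + rewrite IHj. unfold positive_bit; simpl; lia.
  - simpl. clear Hj; induction j; simpl in *; lia.
Qed.

(** * The outcomes of one HVL-Prime step *)

Lemma subst_all_leaves u t : forall Y, In Y (subst_all u t) ->
  forall l, In l (nleaves Y) -> l = u \/ In l (nleaves t).
Proof.
  induction t as [x|a IHa b IHb]; simpl; intros Y HY l Hl.
  - destruct HY as [<-|[]]. simpl in Hl. destruct Hl as [<-|[]]; auto.
  - apply in_app_or in HY.
    destruct HY as [HY|HY]; apply in_map_iff in HY; destruct HY as [Y' [<- HY']];
      simpl in Hl; apply in_app_or in Hl; destruct Hl as [Hl|Hl];
      try (right; apply in_or_app; auto; fail).
    + destruct (IHa Y' HY' l Hl); auto. right; apply in_or_app; auto.
    + destruct (IHb Y' HY' l Hl); auto. right; apply in_or_app; auto.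
Qed.

Lemma subst_all_nonempty u t : subst_all u t <> [].
Proof. induction t; simpl; try congruence. destruct (subst_all u t1); simpl; congruence. Qed.

Lemma ins_all_spec u t : forall Y, In Y (ins_all u t) -> nsize Y = (nsize t + 2)%nat /\
  exists l1 l2, nleaves Y = l1 ++ u :: l2 /\ l1 ++ l2 = nleaves t.
Proof.
  induction t as [x|a IHa b IHb]; simpl; intros Y HY.
  - destruct HY as [<-|[<-|[]]]; simpl; split; try lia.
    + exists [], [x]; auto.
    + exists [x], []; auto.
  - destruct HY as [<-|[<-|HY]].
    + simpl. split; [lia|]. exists [], (nleaves a ++ nleaves b); auto.
    + simpl. split; [lia|]. exists (nleaves a ++ nleaves b), []; rewrite app_nil_r; auto.
    + apply in_app_or in HY.
      destruct HY as [HY|HY]; apply in_map_iff in HY; destruct HY as [Y' [<- HY']].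
      * destruct (IHa Y' HY') as [Hs [l1 [l2 [E1 E2]]]]. simpl. split; [lia|].
        exists l1, (l2 ++ nleaves b). rewrite E1, <- E2, <- !app_assoc. auto.
      * destruct (IHb Y' HY') as [Hs [l1 [l2 [E1 E2]]]]. simpl. split; [lia|].
        exists (nleaves a ++ l1), l2. rewrite E1, <- E2, <- !app_assoc. auto.
Qed.

Lemma ins_all_length u t : length (ins_all u t) = (2 * nsize t)%nat.
Proof. induction t; simpl; auto. rewrite length_app, !length_map, IHt1, IHt2. lia. Qed.

Lemma del_all_spec t : forall o, In o (del_all t) ->
  (forall l, In l (leaf_list o) -> In l (nleaves t)) /\ (cplx o < nsize t)%nat.
Proof.
  induction t as [x|a IHa b IHb]; simpl; intros o Ho.
  - destruct Ho as [<-|[]]. simpl. split; [tauto|lia].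
  - apply in_app_or in Ho.
    destruct Ho as [Ho|Ho]; apply in_map_iff in Ho; destruct Ho as [o' [<- Ho']].
    + destruct (IHa o' Ho') as [H1 H2]. destruct o' as [a'|]; simpl in *; split; try lia;
        intros l Hl; apply in_or_app; try apply in_app_or in Hl; intuition.
    + destruct (IHb o' Ho') as [H1 H2]. destruct o' as [b'|]; simpl in *; split; try lia;
        intros l Hl; apply in_or_app; try apply in_app_or in Hl; intuition.
Qed.

Lemma del_all_nonempty t : del_all t <> [].
Proof. induction t; simpl; try congruence. destruct (del_all t1); simpl; congruence. Qed.

Lemma length_flat_map_const {A B} (h : A -> list B) l c :
  (forall u, length (h u) = c) -> length (flat_map h l) = (length l * c)%nat.
Proof. intros H; induction l; simpl; auto. rewrite length_app, IHl, H. lia. Qed.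

Lemma length_terminals n : length (terminals n) = (2 * n)%nat.
Proof. unfold terminals. rewrite (length_flat_map_const _ _ 2); auto. rewrite length_seq. lia. Qed.

Lemma sumR_terminals (f : lit -> R) n :
  sumR f (terminals n) = sumR (fun i => f (i, true) + f (i, false)) (seq 0 n).
Proof. unfold terminals. rewrite sumR_flat_map. apply sumR_ext. intros; simpl. lra. Qed.

Lemma outcomes_valid n X Y : valid_tree n X ->
  In Y (substitute_outcomes n X ++ insert_outcomes n X ++ delete_outcomes X) -> valid_tree n Y.
Proof.
  intros HV HY. rewrite !in_app_iff in HY. destruct X as [t|]; simpl in HY.
  - destruct HY as [HY|[HY|HY]]; [apply in_flat_map in HY.. | ];
      try (destruct HY as [u [Hu HY]]; apply in_map_iff in HY; destruct HY as [Y' [<- HY']]).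
    + intros l Hl. destruct (subst_all_leaves u t Y' HY' l Hl) as [->|H]; auto.
    + intros l Hl. destruct (ins_all_spec u t Y' HY') as [_ [l1 [l2 [E1 E2]]]].
      simpl in Hl. rewrite E1 in Hl. apply in_app_or in Hl.
      destruct Hl as [Hl|[<-|Hl]]; auto; apply HV; simpl; rewrite <- E2; apply in_or_app; auto.
    + intros l Hl. apply HV. simpl. apply (del_all_spec t Y HY); auto.
  - destruct HY as [[<-|[]]|[HY|[<-|[]]]]; auto.
    apply in_map_iff in HY. destruct HY as [u [<- Hu]]. intros l [<-|[]]; auto.
Qed.

Lemma outcomes_nonempty n X : (1 <= n)%nat ->
  substitute_outcomes n X <> [] /\ insert_outcomes n X <> [] /\ delete_outcomes X <> [].
Proof.
  intros Hn. destruct n as [|n']; [lia|].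
  destruct X as [t|]; simpl; repeat split; try congruence.
  - pose proof (subst_all_nonempty (0%nat, true) t). destruct (subst_all _ t); simpl; congruence.
  - destruct t; simpl; congruence.
  - apply del_all_nonempty.
Qed.

Lemma expect_hvl n X g : expect (hvl_prime n X) g =
  1/3 * expect (uniform (substitute_outcomes n X)) g +
  1/3 * expect (uniform (insert_outcomes n X)) g +
  1/3 * expect (uniform (delete_outcomes X)) g.
Proof. unfold hvl_prime. rewrite !expect_app, !expect_scale. lra. Qed.

Lemma hvl_supported n X : valid_tree n X -> supported (valid_tree n) (hvl_prime n X).
Proof.
  intros HV. unfold hvl_prime.
  repeat apply supported_app; apply supported_scale; try lra; apply supported_uniform;
    intros Y HY; apply (outcomes_valid n X Y HV); rewrite !in_app_iff; tauto.
Qed.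

Lemma hvl_mass n X : (1 <= n)%nat -> expect (hvl_prime n X) (fun _ => 1) = 1.
Proof.
  intros Hn. destruct (outcomes_nonempty n X Hn) as [H1 [H2 H3]].
  rewrite expect_hvl, !uniform_mass; auto. lra.
Qed.

Lemma hvl_iter_supported n k : forall X, valid_tree n X -> supported (valid_tree n) (hvl_iter n k X).
Proof.
  induction k; intros X HV; simpl. repeat constructor; simpl; auto; lra.
  apply supported_dbind with (QA := valid_tree n); auto using hvl_supported.
Qed.

Lemma hvl_iter_mass n k : (1 <= n)%nat ->
  forall X, valid_tree n X -> expect (hvl_iter n k X) (fun _ => 1) = 1.
Proof.
  intros Hn. induction k; intros X HV; simpl. lra.
  rewrite expect_dbind. transitivity (expect (hvl_prime n X) (fun _ => 1)); [|apply hvl_mass; auto].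
  apply Rle_antisym; apply (expect_mono (valid_tree n)); auto using hvl_supported;
    intros; cbv beta; rewrite IHk; auto; lra.
Qed.

Lemma hvl_iter_range n k X g B : (1 <= n)%nat -> valid_tree n X ->
  (forall Y, valid_tree n Y -> 0 <= g Y <= B) -> 0 <= expect (hvl_iter n k X) g <= B.
Proof.
  intros Hn HX H. split.
  - apply (expect_nonneg (valid_tree n)); auto using hvl_iter_supported. intros; apply H; auto.
  - rewrite <- (Rmult_1_r B), <- (hvl_iter_mass n k Hn X HX), <- expect_mult.
    apply (expect_mono (valid_tree n)); auto using hvl_iter_supported.
    intros; cbv beta; rewrite Rmult_1_r; apply H; auto.
Qed.

Lemma expect_hvl_iter1 n X g : expect (hvl_iter n 1 X) g = expect (hvl_prime n X) g.
Proof. simpl. rewrite expect_dbind. apply expect_ext. intros; simpl; ring. Qed.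

Definition smaller_than (c : nat) (Y : tree) : R := if Nat.ltb (cplx Y) c then 1 else 0.

(* Every deletion shrinks the tree, so a shrinking offspring occurs with probability >= 1/3. *)
Lemma shrink_probability n t : (1 <= n)%nat -> 1/3 <= expect (hvl_prime n (Some t)) (smaller_than (nsize t)).
Proof.
  intros Hn. rewrite expect_hvl.
  assert (E : expect (uniform (delete_outcomes (Some t))) (smaller_than (nsize t)) = 1).
  { rewrite <- (uniform_mass _ (del_all_nonempty t)). rewrite !expect_uniform. f_equal.
    apply sumR_ext. intros o Ho. unfold smaller_than. destruct (del_all_spec t o Ho) as [_ H].
    apply Nat.ltb_lt in H. rewrite H. auto. }
  assert (Hrange : forall Y, 0 <= smaller_than (nsize t) Y)
    by (intros; unfold smaller_than; destruct Nat.ltb; lra).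
  pose proof (uniform_nonneg (substitute_outcomes n (Some t)) _ Hrange).
  pose proof (uniform_nonneg (insert_outcomes n (Some t)) _ Hrange). lra.
Qed.

Definition next_front_point (m : nat) (Y : tree) : R :=
  if Nat.eqb (ORDER Y) (S m) && Nat.eqb (cplx Y) (2 * S m - 1) then 1 else 0.

Lemma next_front_point_range m Y : 0 <= next_front_point m Y <= 1.
Proof. unfold next_front_point. destruct (_ && _); lra. Qed.

Definition occurs (V : list nat) (i : nat) : bool := existsb (Nat.eqb i) V.

Lemma occurs_spec V i : occurs V i = true <-> In i V.
Proof.
  unfold occurs. rewrite existsb_exists. split.
  - intros [j [Hj E]]. apply Nat.eqb_eq in E. subst; auto.
  - intros H. exists i. split; auto. apply Nat.eqb_refl.
Qed.

Lemma fresh_indices_count (V : list nat) n :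
  INR n - INR (length V) <= INR (length (filter (fun i => negb (occurs V i)) (seq 0 n))).
Proof.
  pose proof (filter_length (occurs V) (seq 0 n)) as E. rewrite length_seq in E.
  assert (Hocc : (length (filter (occurs V) (seq 0 n)) <= length V)%nat).
  { apply NoDup_incl_length. apply NoDup_filter, seq_NoDup.
    intros i Hi. apply filter_In in Hi. apply occurs_spec, Hi. }
  apply le_INR in Hocc. apply (f_equal INR) in E. rewrite plus_INR in E. lra.
Qed.

Lemma sumR_indicator {A} (p : A -> bool) l :
  sumR (fun x => if p x then 1 else 0) l = INR (length (filter p l)).
Proof. induction l; simpl; auto. rewrite IHl. destruct (p a); simpl length; rewrite ?S_INR; lra. Qed.

Lemma insert_fresh_hits_front t i m : ORDER (Some t) = m -> nsize t = (2 * m - 1)%nat ->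
  ~ In i (vars (nleaves t)) -> forall Y, In Y (ins_all (i, true) t) -> next_front_point m (Some Y) = 1.
Proof.
  intros HO Hs Hi Y HY. destruct (ins_all_spec _ t Y HY) as [Hsz [l1 [l2 [E1 E2]]]].
  assert (HO' : ORDER (Some Y) = S m).
  { rewrite ORDER_count in *. simpl leaf_list in *. rewrite E1, order_count_insert_fresh.
    - rewrite E2, HO. unfold positive_bit; simpl. lia.
    - simpl. rewrite E2. exact Hi. }
  assert (1 <= m)%nat by (destruct t; simpl in Hs; lia).
  unfold next_front_point. rewrite HO'. simpl cplx. rewrite Hsz, Hs, Nat.eqb_refl.
  replace (2 * m - 1 + 2)%nat with (2 * S m - 1)%nat by lia. rewrite Nat.eqb_refl. auto.
Qed.

Lemma insert_front_hits n t m : ORDER (Some t) = m -> nsize t = (2 * m - 1)%nat ->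
  INR (2 * nsize t) * (INR n - INR m) <=
  sumR (next_front_point m) (insert_outcomes n (Some t)).
Proof.
  intros HO Hs. set (V := vars (nleaves t)).
  assert (1 <= nsize t)%nat by (destruct t; simpl; lia).
  assert (HV : length V = m).
  { unfold V, vars. rewrite length_map. change (length (nleaves t) = m).
    pose proof (nleaves_length t). lia. }
  pose proof (fresh_indices_count V n) as F. rewrite HV in F.
  apply Rle_trans with (INR (2 * nsize t) * INR (length (filter (fun i => negb (occurs V i)) (seq 0 n)))).
  { apply Rmult_le_compat_l; auto using pos_INR. }
  simpl insert_outcomes. rewrite sumR_flat_map, sumR_terminals, <- sumR_indicator, <- sumR_scal.
  apply sumR_mono. intros i _.
  assert (0 <= sumR (next_front_point m) (map Some (ins_all (i, false) t)))
    by (apply sumR_nonneg; intros; apply next_front_point_range).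
  destruct (occurs V i) eqn:E; simpl negb.
  - assert (0 <= sumR (next_front_point m) (map Some (ins_all (i, true) t)))
      by (apply sumR_nonneg; intros; apply next_front_point_range). lra.
  - assert (Hi : ~ In i V) by (rewrite <- occurs_spec; congruence).
    rewrite sumR_map, (sumR_ext _ _ (fun _ => 1)), sumR_const, ins_all_length.
    + lra.
    + intros Y HY. apply (insert_fresh_hits_front t i m); auto.
Qed.

Lemma next_front_probability n Z m : (1 <= n)%nat -> ORDER Z = m -> cplx Z = (2 * m - 1)%nat ->
  (m < n)%nat -> INR (n - m) / (6 * INR n) <= expect (hvl_prime n Z) (next_front_point m).
Proof.
  intros Hn HO HC Hm. rewrite expect_hvl, minus_INR by lia.
  assert (Hrange : forall Y, 0 <= next_front_point m Y) by apply next_front_point_range.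
  pose proof (uniform_nonneg (substitute_outcomes n Z) _ Hrange).
  pose proof (uniform_nonneg (delete_outcomes Z) _ Hrange).
  assert (HnR : 0 < INR n) by (apply lt_0_INR; lia).
  enough ((INR n - INR m) / (2 * INR n) <= expect (uniform (insert_outcomes n Z)) (next_front_point m))
    by (unfold Rdiv in *; rewrite Rinv_mult in *; nra).
  rewrite expect_uniform. destruct Z as [t|].
  - pose proof (insert_front_hits n t m HO HC) as Hhits.
    simpl insert_outcomes in *. rewrite (length_flat_map_const _ _ (2 * nsize t))
      by (intros; rewrite length_map, ins_all_length; auto).
    rewrite length_terminals. rewrite !mult_INR in *. simpl INR in *.
    assert (0 < INR (nsize t)) by (apply lt_0_INR; destruct t; simpl; lia).
    apply Rle_trans with
      (/ ((1 + 1) * INR n * ((1 + 1) * INR (nsize t))) * ((1 + 1) * INR (nsize t) * (INR n - INR m))).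
    + right. field. lra.
    + apply Rmult_le_compat_l; [left; apply Rinv_0_lt_compat; nra | exact Hhits].
  - change (ORDER None) with 0%nat in HO. subst m. simpl insert_outcomes.
    rewrite length_map, length_terminals, sumR_map, sumR_terminals.
    rewrite (sumR_ext _ _ (fun _ => 1)).
    + rewrite sumR_const, length_seq, mult_INR. simpl INR. right. field. lra.
    + intros i _. unfold next_front_point.
      replace (ORDER (Some (Leaf (i, true)))) with 1%nat by reflexivity.
      replace (ORDER (Some (Leaf (i, false)))) with 0%nat by reflexivity. simpl. lra.
Qed.

(** * Both mutation operators are expectation functionals *)

Lemma infinite_sum_ext f g l : (forall j, f j = g j) -> infinite_sum f l -> infinite_sum g l.
Proof.
  intros H Hf eps Heps. destruct (Hf eps Heps) as [N HN]. exists N. intros m Hm.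
  rewrite <- (sum_eq f g m); auto.
Qed.

Lemma infinite_sum_scal f l c : infinite_sum f l -> infinite_sum (fun j => c * f j) (c * l).
Proof.
  intros Hf. assert (Hc : Un_cv (fun _ => c) c).
  { intros eps He. exists 0%nat. intros; unfold Rdist. rewrite Rminus_diag, Rabs_R0. lra. }
  pose proof (CV_mult _ _ _ _ Hc Hf) as H. intros eps He. destruct (H eps He) as [N HN].
  exists N. intros m Hm. rewrite <- (sum_eq (fun j => f j * c)), <- scal_sum; [apply HN; auto|].
  intros; ring.
Qed.

Lemma infinite_sum_plus f g l1 l2 : infinite_sum f l1 -> infinite_sum g l2 ->
  infinite_sum (fun j => f j + g j) (l1 + l2).
Proof.
  intros Hf Hg. pose proof (CV_plus _ _ _ _ Hf Hg) as H. intros eps He.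
  destruct (H eps He) as [N HN]. exists N. intros m Hm. rewrite plus_sum. apply HN; auto.
Qed.

Lemma series_eq f l : infinite_sum f l -> series f = l.
Proof.
  intros H. unfold series. apply (uniqueness_sum f); auto.
  apply (epsilon_spec (inhabits 0) (fun l => infinite_sum f l)). exists l; auto.
Qed.

Definition poisson1 (j : nat) : R := exp (-1) / INR (fact j).

Lemma poisson1_pos j : 0 < poisson1 j.
Proof. unfold poisson1. apply Rdiv_lt_0_compat. apply exp_pos. apply lt_0_INR, lt_O_fact. Qed.

(* sum_j e^{-1}/j! = e^{-1} e = 1. *)
Lemma poisson1_sum : infinite_sum poisson1 1.
Proof.
  pose proof (proj2_sig (exist_exp 1)) as H. simpl in H. fold (exp 1) in H.
  unfold exp_in in H. apply (infinite_sum_scal _ _ (exp (-1))) in H.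
  replace 1 with (exp (-1) * exp 1)
    by (rewrite <- exp_plus; replace (-1 + 1) with 0 by ring; apply exp_0).
  apply infinite_sum_ext with (f := fun j => exp (-1) * (/ INR (fact j) * 1 ^ j)); auto.
  intros j. unfold poisson1. rewrite pow1. field. apply INR_fact_neq_0.
Qed.

Definition bounded_on (n : nat) (g : tree -> R) : Prop :=
  exists B, forall Y, valid_tree n Y -> 0 <= g Y <= B.

Lemma bounded_on_plus n g h : bounded_on n g -> bounded_on n h -> bounded_on n (fun Y => g Y + h Y).
Proof.
  intros [B1 H1] [B2 H2]. exists (B1 + B2). intros Y HY.
  specialize (H1 Y HY); specialize (H2 Y HY); lra.
Qed.

Lemma bounded_on_scal n g c : 0 <= c -> bounded_on n g -> bounded_on n (fun Y => c * g Y).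
Proof. intros Hc [B H]. exists (c * B). intros Y HY. specialize (H Y HY). split; nra. Qed.

Lemma bounded_on_const n c : 0 <= c -> bounded_on n (fun _ => c).
Proof. intros; exists c; intros; lra. Qed.

Definition multi_term (n : nat) (X : tree) (g : tree -> R) (j : nat) : R :=
  poisson1 j * expect (hvl_iter n (S j) X) g.

(* The series defining multi-operation mutation converges on bounded functions,
   by comparison with the Poisson weights. *)
Lemma multi_mut_converges n X g : (1 <= n)%nat -> valid_tree n X -> bounded_on n g ->
  infinite_sum (multi_term n X g) (multi_mut n X g).
Proof.
  intros Hn HX [B HB].
  assert (HB0 : 0 <= B) by (destruct (HB None) as [A1 A2]; [intros l [] | lra]).
  assert (Hcv : {l | Un_cv (fun N => sum_f_R0 (multi_term n X g) N) l}).
  { apply Rseries_CV_comp with (Bn := fun j => poisson1 j * B).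
    - intros j. unfold multi_term. pose proof (poisson1_pos j).
      pose proof (hvl_iter_range n (S j) X g B Hn HX HB). split; nra.
    - exists (B * 1). apply infinite_sum_ext with (f := fun j => B * poisson1 j).
      + intros; ring.
      + apply infinite_sum_scal, poisson1_sum. }
  destruct Hcv as [l Hl]. unfold multi_mut. fold (multi_term n X g). rewrite (series_eq _ l); auto.
Qed.

(* Weight of the event "exactly one HVL-Prime application" under each mutation operator. *)
Definition first_step_weight (alg : algorithm) : R :=
  match alg with SMO_GP_single => 1 | SMO_GP_multi => exp (-1) end.

Lemma first_step_weight_ge alg : / 3 <= first_step_weight alg.
Proof.
  destruct alg; simpl; [lra|].
  pose proof exp_le_3. pose proof (exp_pos 1).
  replace (exp (-1)) with (/ exp 1) by (rewrite <- exp_Ropp; f_equal; ring).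
  apply Rinv_le_contravar; lra.
Qed.

Section MutationFunctional.
Variables (alg : algorithm) (n : nat) (X : tree).
Hypothesis n_pos : (1 <= n)%nat.
Hypothesis X_valid : valid_tree n X.
Let M := mutation alg n X.

Lemma mutation_plus g h : bounded_on n g -> bounded_on n h -> M (fun Y => g Y + h Y) = M g + M h.
Proof.
  intros Hg Hh. unfold M. destruct alg; simpl.
  - apply expect_plus.
  - apply (uniqueness_sum (multi_term n X (fun Y => g Y + h Y))).
    + apply multi_mut_converges; auto using bounded_on_plus.
    + apply infinite_sum_ext with (f := fun j => multi_term n X g j + multi_term n X h j).
      * intros j; unfold multi_term; rewrite expect_plus; ring.
      * apply infinite_sum_plus; apply multi_mut_converges; auto.
Qed.

Lemma mutation_scal c g : 0 <= c -> bounded_on n g -> M (fun Y => c * g Y) = c * M g.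
Proof.
  intros Hc Hg. unfold M. destruct alg; simpl.
  - apply expect_mult.
  - apply (uniqueness_sum (multi_term n X (fun Y => c * g Y))).
    + apply multi_mut_converges; auto using bounded_on_scal.
    + apply infinite_sum_ext with (f := fun j => c * multi_term n X g j).
      * intros j; unfold multi_term; rewrite expect_mult; ring.
      * apply infinite_sum_scal; apply multi_mut_converges; auto.
Qed.

Lemma mutation_mono g h : bounded_on n g -> bounded_on n h ->
  (forall Y, valid_tree n Y -> g Y <= h Y) -> M g <= M h.
Proof.
  intros Hg Hh Hgh. unfold M. destruct alg; simpl.
  - apply (expect_mono (valid_tree n)); auto using hvl_iter_supported.
  - apply (@Rle_cv_lim (fun N => sum_f_R0 (multi_term n X g) N) (fun N => sum_f_R0 (multi_term n X h) N)).
    + intros N. apply sum_Rle. intros j _. unfold multi_term.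
      apply Rmult_le_compat_l; [left; apply poisson1_pos|].
      apply (expect_mono (valid_tree n)); auto using hvl_iter_supported.
    + apply multi_mut_converges; auto.
    + apply multi_mut_converges; auto.
Qed.

Lemma mutation_const c : 0 <= c -> M (fun _ => c) = c.
Proof.
  intros Hc. unfold M. destruct alg; simpl.
  - unfold single_mut. rewrite expect_const, hvl_iter_mass; auto; ring.
  - apply (uniqueness_sum (multi_term n X (fun _ => c))).
    + apply multi_mut_converges; auto using bounded_on_const.
    + apply infinite_sum_ext with (f := fun j => c * poisson1 j).
      * intros j; unfold multi_term; rewrite expect_const, hvl_iter_mass; auto; ring.
      * pose proof (infinite_sum_scal _ _ c poisson1_sum) as H. rewrite Rmult_1_r in H. exact H.
Qed.

Lemma mutation_range g B : (forall Y, valid_tree n Y -> 0 <= g Y <= B) -> 0 <= M g <= B.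
Proof.
  intros Hg. assert (HB : 0 <= B) by (destruct (Hg None) as [A1 A2]; [intros l [] | lra]).
  assert (Hb : bounded_on n g) by (exists B; auto).
  rewrite <- (mutation_const 0), <- (mutation_const B) by lra.
  split; apply mutation_mono; auto using bounded_on_const, Rle_refl; intros Y HY; apply Hg; auto.
Qed.

Lemma mutation_first_step g : bounded_on n g -> first_step_weight alg * expect (hvl_prime n X) g <= M g.
Proof.
  intros Hg. unfold M. destruct alg; simpl.
  - unfold single_mut. rewrite expect_hvl_iter1. lra.
  - assert (Hterm : forall j, 0 <= multi_term n X g j).
    { intros j. destruct Hg as [B HB]. pose proof (poisson1_pos j).
      pose proof (hvl_iter_range n (S j) X g B n_pos X_valid HB). unfold multi_term. nra. }
    pose proof (sum_incr _ 0 _ (multi_mut_converges n X g n_pos X_valid Hg) Hterm) as H.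
    simpl sum_f_R0 in H. unfold multi_term, poisson1 in H. rewrite expect_hvl_iter1 in H.
    replace (exp (-1) / INR (fact 0)) with (exp (-1)) in H by (simpl; field). exact H.
Qed.
End MutationFunctional.

(** * The Pareto front and the population *)

Lemma front_point_undominated Y k : ORDER Y = k -> cplx Y = (2 * k - 1)%nat ->
  forall Z, sdom Z Y = false.
Proof.
  intros HO HC Z. destruct (sdom Z Y) eqn:E; auto. exfalso. unfold sdom, wdom in E.
  rewrite HO, HC in E. pose proof (ORDER_cplx Z).
  repeat rewrite ?andb_true_iff, ?orb_true_iff, ?Nat.leb_le, ?Nat.ltb_lt in E. lia.
Qed.

Lemma front_point_weakly_dominated Y k : ORDER Y = k -> cplx Y = (2 * k - 1)%nat ->
  forall W, wdom W Y = true -> ORDER W = k /\ cplx W = (2 * k - 1)%nat.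
Proof.
  intros HO HC W. unfold wdom. rewrite HO, HC. pose proof (ORDER_cplx W).
  rewrite andb_true_iff, !Nat.leb_le. lia.
Qed.

Lemma sdom_intro Z Y : (ORDER Y <= ORDER Z)%nat -> (cplx Z < cplx Y)%nat -> sdom Z Y = true.
Proof.
  intros H1 H2. unfold sdom, wdom.
  rewrite (proj2 (Nat.leb_le _ _) H1), (proj2 (Nat.leb_le (cplx Z) (cplx Y))), 
    (proj2 (Nat.ltb_lt (cplx Z) (cplx Y))), orb_true_r by lia. auto.
Qed.

(* Conversely every Pareto optimal tree is a front point (k, 2k-1) with k <= n:
   otherwise the empty tree or the comb of ORDER k would dominate it. *)
Lemma pareto_optimal_front_point n Y : pareto_optimal n Y ->
  (ORDER Y <= n)%nat /\ cplx Y = (2 * ORDER Y - 1)%nat.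
Proof.
  intros [HY HP]. split; [apply ORDER_le_n; auto|]. pose proof (ORDER_cplx Y).
  destruct (Nat.eq_dec (cplx Y) (2 * ORDER Y - 1)) as [E|NE]; auto. exfalso.
  pose proof (ORDER_le_n n Y HY). destruct (ORDER Y) as [|j] eqn:Ek.
  - assert (V : valid_tree n None) by (intros l []).
    specialize (HP None V). rewrite sdom_intro in HP; [discriminate| |]; rewrite ?Ek; simpl; lia.
  - destruct (positive_comb_spec n j) as [V [O C]]; [lia|]. specialize (HP _ V).
    rewrite sdom_intro in HP; [discriminate| |]; rewrite ?Ek, ?O, ?C; lia.
Qed.

Definition has_front_point (P : list tree) (k : nat) : bool :=
  existsb (fun Z => Nat.eqb (ORDER Z) k && Nat.eqb (cplx Z) (2 * k - 1)) P.

Lemma has_front_point_spec P k : has_front_point P k = true <->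
  exists Z, In Z P /\ ORDER Z = k /\ cplx Z = (2 * k - 1)%nat.
Proof.
  unfold has_front_point. rewrite existsb_exists. split.
  - intros [Z [H1 H2]]. rewrite andb_true_iff, !Nat.eqb_eq in H2. eauto.
  - intros [Z [H1 [H2 H3]]]. exists Z. rewrite H2, H3, !Nat.eqb_refl. auto.
Qed.

Definition front_prefix (P : list tree) (j : nat) : bool := forallb (has_front_point P) (seq 0 j).

Lemma front_prefix_spec P j : front_prefix P j = true <-> forall k, (k < j)%nat -> has_front_point P k = true.
Proof.
  unfold front_prefix. rewrite forallb_forall.
  split; intros H k Hk; apply H; apply in_seq in Hk || apply in_seq; lia.
Qed.

Lemma front_prefix_gap P k : front_prefix P 1 = true -> front_prefix P (S k) = false ->
  exists m, (m < k)%nat /\ front_prefix P (S m) = true /\ front_prefix P (S (S m)) = false.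
Proof.
  intros H1. induction k; intros Hk; [congruence|].
  destruct (front_prefix P (S k)) eqn:E; [exists k; auto|].
  destruct (IHk eq_refl) as [m [? ?]]. exists m; split; auto.
Qed.

Lemma front_prefix_covers n P : front_prefix P (S n) = true -> covers_front n P.
Proof.
  intros HA Y HY. destruct (pareto_optimal_front_point n Y HY) as [Hle HC].
  apply front_prefix_spec with (k := ORDER Y) in HA; [|lia].
  apply has_front_point_spec in HA. destruct HA as [Z [HZ [HO HZC]]]. exists Z. repeat split; auto; lia.
Qed.

Lemma smo_update_cases P Y :
  (smo_update P Y = P /\ exists Z, In Z P /\ sdom Z Y = true) \/
  (smo_update P Y = filter (fun Z => negb (wdom Y Z)) P ++ [Y] /\ forall Z, In Z P -> sdom Z Y = false).
Proof.
  unfold smo_update. destruct (existsb (fun Z => sdom Z Y) P) eqn:E.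
  - left. split; auto. apply existsb_exists in E. auto.
  - right. split; auto. intros Z HZ. destruct (sdom Z Y) eqn:F; auto.
    assert (existsb (fun Z => sdom Z Y) P = true) by (apply existsb_exists; eauto). congruence.
Qed.

Lemma smo_update_in P Y Z : In Z (smo_update P Y) -> In Z P \/ Z = Y.
Proof.
  destruct (smo_update_cases P Y) as [[-> _]|[-> _]]; auto. rewrite in_app_iff.
  intros [H|[H|[]]]; auto. apply filter_In in H. tauto.
Qed.

Lemma smo_update_keeps_front P Y k : has_front_point P k = true -> has_front_point (smo_update P Y) k = true.
Proof.
  rewrite !has_front_point_spec. intros [Z [HZ [HO HC]]].
  destruct (smo_update_cases P Y) as [[-> _]|[-> _]]; eauto.
  destruct (wdom Y Z) eqn:E.
  - exists Y. rewrite in_app_iff. split; [simpl; auto|]. apply (front_point_weakly_dominated Z k); auto.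
  - exists Z. split; auto. apply in_or_app. left. apply filter_In. rewrite E; auto.
Qed.

Lemma smo_update_keeps_prefix P Y j : front_prefix P j = true -> front_prefix (smo_update P Y) j = true.
Proof. rewrite !front_prefix_spec. intros H k Hk. apply smo_update_keeps_front; auto. Qed.

Lemma smo_update_accepts_front P Y k : ORDER Y = k -> cplx Y = (2 * k - 1)%nat ->
  has_front_point (smo_update P Y) k = true.
Proof.
  intros HO HC. apply has_front_point_spec. exists Y. split; auto.
  destruct (smo_update_cases P Y) as [[_ [Z [_ H]]]|[-> _]].
  - rewrite (front_point_undominated Y k HO HC) in H. discriminate.
  - apply in_or_app; simpl; auto.
Qed.

Definition min_cplx (P : list tree) : nat :=
  fold_right (fun Z acc => Nat.min (cplx Z) acc) (cplx (hd None P)) P.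

Lemma min_cplx_le P Z : In Z P -> (min_cplx P <= cplx Z)%nat.
Proof.
  unfold min_cplx. generalize (cplx (hd None P)). intros a.
  induction P; simpl; intros H; [destruct H|]. destruct H as [<-|H]; [lia|]. specialize (IHP H); lia.
Qed.

Lemma min_cplx_attained P : P <> [] -> exists Z, In Z P /\ cplx Z = min_cplx P.
Proof.
  intros HP. unfold min_cplx.
  assert (H : forall a l, fold_right (fun Z acc => Nat.min (cplx Z) acc) a l = a \/
    exists Z, In Z l /\ fold_right (fun Z acc => Nat.min (cplx Z) acc) a l = cplx Z).
  { intros a. induction l; simpl; auto. destruct IHl as [E|[Z [H E]]]; rewrite E.
    - destruct (Nat.min_spec (cplx a0) a) as [[_ ->]|[_ ->]]; eauto.
    - destruct (Nat.min_spec (cplx a0) (cplx Z)) as [[_ ->]|[_ ->]]; eauto. }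
  destruct (H (cplx (hd None P)) P) as [E|[Z [HZ E]]]; eauto.
  rewrite E. exists (hd None P). split; auto. destruct P; [congruence | simpl; auto].
Qed.

Lemma smo_update_nonempty P Y : P <> [] -> smo_update P Y <> [].
Proof.
  intros HP. destruct (smo_update_cases P Y) as [[-> _]|[-> _]]; auto.
  destruct (filter _ P); simpl; congruence.
Qed.

(* A removed tree is weakly dominated by the accepted offspring, hence no smaller. *)
Lemma smo_update_min_cplx P Y : P <> [] -> (min_cplx (smo_update P Y) <= min_cplx P)%nat.
Proof.
  intros HP. destruct (min_cplx_attained P HP) as [Z [HZ E]]. rewrite <- E.
  destruct (smo_update_cases P Y) as [[-> _]|[-> _]]. apply min_cplx_le; auto.
  destruct (wdom Y Z) eqn:W.
  - unfold wdom in W. apply andb_true_iff in W. destruct W as [_ W]. apply Nat.leb_le in W.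
    eapply Nat.le_trans; [apply min_cplx_le|exact W]. apply in_or_app; simpl; auto.
  - apply min_cplx_le. apply in_or_app; left; apply filter_In; rewrite W; auto.
Qed.

Lemma smo_update_accepts_smaller P Y : P <> [] -> (cplx Y < min_cplx P)%nat ->
  (min_cplx (smo_update P Y) <= cplx Y)%nat.
Proof.
  intros HP HY. destruct (smo_update_cases P Y) as [[_ [Z [HZ H]]]|[-> _]].
  - exfalso. unfold sdom, wdom in H. rewrite !andb_true_iff in H.
    destruct H as [[_ H] _]. apply Nat.leb_le in H. pose proof (min_cplx_le P Z HZ). lia.
  - apply min_cplx_le. apply in_or_app; simpl; auto.
Qed.

(* The front point (0, 0) is the empty tree, present iff the least complexity is 0. *)
Lemma has_empty_min_cplx P : P <> [] -> (has_front_point P 0 = true <-> min_cplx P = 0%nat).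
Proof.
  intros HP. rewrite has_front_point_spec. split.
  - intros [Z [HZ [_ HC]]]. pose proof (min_cplx_le P Z HZ). simpl in HC. lia.
  - intros E. destruct (min_cplx_attained P HP) as [Z [HZ HC]]. exists Z. rewrite E in HC.
    pose proof (ORDER_cplx Z). simpl. repeat split; auto; lia.
Qed.

(* Populations reachable from a single valid tree: nonempty, over T, and with pairwise
   distinct ORDER values (two trees of equal ORDER are comparable, so one is removed). *)
Definition wf_population (n : nat) (P : list tree) : Prop :=
  P <> [] /\ Forall (valid_tree n) P /\ NoDup (map ORDER P).

Lemma wf_population_valid n P X : wf_population n P -> In X P -> valid_tree n X.
Proof. intros [_ [H _]] HX. eapply Forall_forall; eauto. Qed.

Lemma smo_update_wf n P Y : wf_population n P -> valid_tree n Y -> wf_population n (smo_update P Y).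
Proof.
  intros [H1 [H2 H3]] HY. split; [apply smo_update_nonempty; auto|]. split.
  - apply Forall_forall. intros Z HZ. apply smo_update_in in HZ. destruct HZ as [HZ| ->]; auto.
    eapply Forall_forall in H2; eauto.
  - destruct (smo_update_cases P Y) as [[-> _]|[-> Hs]]; auto. rewrite map_app.
    apply NoDup_app; [apply NoDup_map_filter; auto | repeat constructor; intros [] |].
    intros k Hk [E|[]]. apply in_map_iff in Hk. destruct Hk as [Z [EZ HZ]]. apply filter_In in HZ.
    destruct HZ as [HZ W]. specialize (Hs Z HZ). unfold sdom, wdom in Hs, W. rewrite <- EZ in E.
    rewrite E, Nat.leb_refl in Hs, W. rewrite Nat.ltb_irrefl in Hs. simpl in Hs, W.
    destruct (Nat.leb_spec (cplx Y) (cplx Z)); [discriminate|].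
    destruct (Nat.leb_spec (cplx Z) (cplx Y)), (Nat.ltb_spec (cplx Z) (cplx Y)); simpl in Hs; lia || discriminate.
Qed.

(* Distinct ORDER values in [[0, n]]: at most n+1 trees. *)
Lemma wf_population_size n P : wf_population n P -> (length P <= S n)%nat.
Proof.
  intros [_ [H2 H3]]. rewrite <- (length_map ORDER), <- (length_seq (S n) 0).
  apply NoDup_incl_length; auto. intros k Hk. apply in_map_iff in Hk. destruct Hk as [Z [<- HZ]].
  eapply Forall_forall in H2; eauto. apply ORDER_le_n in H2. apply in_seq. lia.
Qed.

(** * The potential and its drift *)

Section Potential.
Variables (alg : algorithm) (n : nat).
Hypothesis n_pos : (1 <= n)%nat.

Let q := first_step_weight alg.

Lemma q_pos : 0 < q.
Proof. pose proof (first_step_weight_ge alg). unfold q. lra. Qed.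

(* Potential drop per node removed while the empty tree is missing (A), and for reaching
   front level m+1 (D_m): n+1 times the reciprocal of the lower bounds q/3 and
   q(n-m)/(6n) on the probabilities of the two improving events. *)
Definition shrink_gain : R := 3 * INR (S n) / q.
Definition level_gain (m : nat) : R := 6 * INR n * INR (S n) / (q * INR (n - m)).

Definition front_potential (P : list tree) : R :=
  sumR (fun m => if front_prefix P (S (S m)) then 0 else level_gain m) (seq 0 n).
Definition full_front_potential : R := sumR level_gain (seq 0 n).

Definition potential (P : list tree) : R :=
  if has_front_point P 0 then front_potential P else shrink_gain * INR (min_cplx P) + full_front_potential.

Lemma shrink_gain_pos : 0 < shrink_gain.
Proof. unfold shrink_gain. pose proof q_pos. pose proof (lt_0_INR (S n) (Nat.lt_0_succ n)). apply Rdiv_lt_0_compat; lra. Qed.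

Lemma level_gain_nonneg m : 0 <= level_gain m.
Proof.
  unfold level_gain. pose proof q_pos. pose proof (pos_INR n). pose proof (pos_INR (S n)).
  destruct (pos_INR (n - m)) as [H2|H2].
  - apply Rmult_le_pos; [nra|]. left. apply Rinv_0_lt_compat. nra.
  - rewrite <- H2, Rmult_0_r. unfold Rdiv. rewrite Rinv_0. lra.
Qed.

Lemma front_potential_range P : 0 <= front_potential P <= full_front_potential.
Proof.
  split; [apply sumR_nonneg | apply sumR_mono]; intros m _; pose proof (level_gain_nonneg m);
    destruct front_prefix; lra.
Qed.

Lemma potential_nonneg P : 0 <= potential P.
Proof.
  unfold potential. pose proof (front_potential_range P). destruct has_front_point; [lra|].
  pose proof shrink_gain_pos. pose proof (pos_INR (min_cplx P)). nra.
Qed.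

(* Front levels once reached stay reached, so the phase-2 part never increases. *)
Lemma front_potential_update P Y : front_potential (smo_update P Y) <= front_potential P.
Proof.
  apply sumR_mono. intros m _. destruct (front_prefix P (S (S m))) eqn:E.
  - rewrite (smo_update_keeps_prefix P Y _ E). lra.
  - destruct (front_prefix (smo_update P Y) (S (S m))); [apply level_gain_nonneg | lra].
Qed.

Lemma potential_update P Y : P <> [] -> potential (smo_update P Y) <= potential P.
Proof.
  intros HP. pose proof (front_potential_range (smo_update P Y)). unfold potential.
  destruct (has_front_point P 0) eqn:E.
  - rewrite (smo_update_keeps_front P Y 0 E). apply front_potential_update.
  - pose proof shrink_gain_pos. pose proof (le_INR _ _ (smo_update_min_cplx P Y HP)).
    pose proof (pos_INR (min_cplx P)). destruct (has_front_point (smo_update P Y) 0); nra.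
Qed.

Definition improving_move (P : list tree) (X : tree) (g : tree -> R) (D : R) : Prop :=
  In X P /\ 0 <= D /\ (forall Y, valid_tree n Y -> 0 <= g Y <= 1) /\
  (forall Y, valid_tree n Y -> potential (smo_update P Y) + D * g Y <= potential P) /\
  INR (S n) <= D * (q * expect (hvl_prime n X) g).

(* Phase 1: while the empty tree is missing, delete a leaf of a smallest tree. *)
Lemma shrink_move P : wf_population n P -> has_front_point P 0 = false ->
  exists X, improving_move P X (smaller_than (min_cplx P)) shrink_gain.
Proof.
  intros HI E0. pose proof HI as [HP _]. pose proof shrink_gain_pos.
  assert (Hmc : min_cplx P <> 0%nat) by (intro F; apply (has_empty_min_cplx P HP) in F; congruence).
  destruct (min_cplx_attained P HP) as [[t|] [HZ HZc]]; [|simpl in HZc; lia].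
  exists (Some t). repeat split; auto; try lra; try (unfold smaller_than; destruct Nat.ltb; lra).
  - intros Y HY. unfold smaller_than. destruct (Nat.ltb_spec (cplx Y) (min_cplx P)) as [Hlt|Hge].
    + pose proof (smo_update_accepts_smaller P Y HP Hlt).
      assert (INR (min_cplx (smo_update P Y)) + 1 <= INR (min_cplx P))
        by (rewrite <- S_INR; apply le_INR; lia).
      assert (shrink_gain * (INR (min_cplx (smo_update P Y)) + 1) <= shrink_gain * INR (min_cplx P))
        by (apply Rmult_le_compat_l; lra).
      pose proof (front_potential_range (smo_update P Y)).
      pose proof (pos_INR (min_cplx (smo_update P Y))).
      unfold potential. rewrite E0. destruct (has_front_point (smo_update P Y) 0); nra.
    + rewrite Rmult_0_r, Rplus_0_r. apply potential_update; auto.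
  - pose proof (shrink_probability n t n_pos). simpl in HZc. rewrite HZc in H0. pose proof q_pos.
    apply Rle_trans with (shrink_gain * (q * (1/3))).
    + right. unfold shrink_gain. field. lra.
    + apply Rmult_le_compat_l; [lra|]. apply Rmult_le_compat_l; lra.
Qed.

(* Phase 2: if the front points 0..m are present but m+1 is not, insert a fresh positive
   literal into the front tree of ORDER m. *)
Lemma level_move P m : front_prefix P (S m) = true -> front_prefix P (S (S m)) = false ->
  (m < n)%nat -> exists X, improving_move P X (next_front_point m) (level_gain m).
Proof.
  intros Am Am1 Hm.
  assert (Hhm : has_front_point P m = true) by (apply front_prefix_spec with (j := S m); auto).
  apply has_front_point_spec in Hhm. destruct Hhm as [Z [HZ [HO HCZ]]].
  assert (E0 : has_front_point P 0 = true) by (apply front_prefix_spec with (j := S m); auto; lia).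
  exists Z. repeat split; auto using level_gain_nonneg; try (intros; apply next_front_point_range).
  - intros Y HY. unfold potential. rewrite E0, (smo_update_keeps_front P Y 0 E0).
    unfold next_front_point. destruct (Nat.eqb_spec (ORDER Y) (S m)), (Nat.eqb_spec (cplx Y) (2 * S m - 1));
      simpl; try (rewrite Rmult_0_r, Rplus_0_r; apply front_potential_update).
    rewrite Rmult_1_r. apply sumR_mono_slack with (x0 := m); [apply in_seq; lia | |].
    + intros j _. destruct (front_prefix P (S (S j))) eqn:E.
      * rewrite (smo_update_keeps_prefix P Y _ E). lra.
      * destruct (front_prefix (smo_update P Y) (S (S j))); [apply level_gain_nonneg | lra].
    + rewrite Am1. replace (front_prefix (smo_update P Y) (S (S m))) with true; [lra|].
      symmetry. apply front_prefix_spec. intros k Hk. destruct (Nat.eq_dec k (S m)) as [->|NE].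
      * apply smo_update_accepts_front; auto.
      * apply front_prefix_spec with (j := S m); [apply smo_update_keeps_prefix; auto | lia].
  - pose proof (next_front_probability n Z m n_pos HO HCZ Hm). pose proof q_pos.
    assert (0 < INR (n - m)) by (apply lt_0_INR; lia).
    assert (0 < INR n) by (apply lt_0_INR; lia).
    apply Rle_trans with (level_gain m * (q * (INR (n - m) / (6 * INR n)))).
    + right. unfold level_gain. field. repeat split; lra.
    + apply Rmult_le_compat_l; [apply level_gain_nonneg|]. apply Rmult_le_compat_l; lra.
Qed.

Lemma improving_move_exists P : wf_population n P -> ~ covers_front n P ->
  exists X g D, improving_move P X g D.
Proof.
  intros HI HC. destruct (has_front_point P 0) eqn:E0.
  - assert (Hbase : front_prefix P 1 = true) by (unfold front_prefix; simpl; rewrite E0; auto).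
    assert (Htop : front_prefix P (S n) = false)
      by (destruct (front_prefix P (S n)) eqn:F; auto; exfalso; apply HC, front_prefix_covers; auto).
    destruct (front_prefix_gap P n Hbase Htop) as [m [Hm [Am Am1]]]. destruct (level_move P m Am Am1 Hm) as [X HX]. eauto.
  - destruct (shrink_move P HI E0) as [X HX]. eauto.
Qed.

Lemma potential_after_bounded P : P <> [] -> bounded_on n (fun Y => potential (smo_update P Y)).
Proof. intros HP. exists (potential P). intros Y _. split; [apply potential_nonneg | apply potential_update; auto]. Qed.

Lemma improving_move_drift P X g D : P <> [] -> valid_tree n X -> improving_move P X g D ->
  mutation alg n X (fun Y => potential (smo_update P Y)) + INR (S n) <= potential P.
Proof.
  intros HP HX [_ [HD [Hg [Hdrop Hprob]]]].
  assert (Hb : bounded_on n g) by (exists 1; auto).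
  assert (HbV := potential_after_bounded P HP).
  pose proof (mutation_first_step alg n X n_pos HX g Hb).
  assert (Hsum : mutation alg n X (fun Y => potential (smo_update P Y) + D * g Y) <= potential P).
  { rewrite <- (mutation_const alg n X n_pos HX (potential P)) by apply potential_nonneg.
    apply (mutation_mono alg n X n_pos HX); auto using bounded_on_plus, bounded_on_scal, bounded_on_const,
      potential_nonneg. }
  rewrite mutation_plus, mutation_scal in Hsum by auto using bounded_on_scal.
  assert (D * (q * expect (hvl_prime n X) g) <= D * mutation alg n X g) by (apply Rmult_le_compat_l; auto).
  lra.
Qed.

(* Drift: from a population not covering the front, one iteration of SMO-GP lowers the
   expected potential by at least 1 (the improving parent is chosen w.p. >= 1/(n+1)). *)
Lemma potential_drift P : wf_population n P -> ~ covers_front n P ->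
  1 + / INR (length P) * sumR (fun X => mutation alg n X (fun Y => potential (smo_update P Y))) P
  <= potential P.
Proof.
  intros HI HC. pose proof HI as [HP _].
  destruct (improving_move_exists P HI HC) as [X0 [g0 [D HX0]]].
  pose proof (proj1 HX0) as Hin.
  assert (Hgen : forall X, In X P -> mutation alg n X (fun Y => potential (smo_update P Y)) <= potential P).
  { intros X HX. apply (mutation_range alg n X n_pos (wf_population_valid n P X HI HX)).
    intros Y _. split; [apply potential_nonneg | apply potential_update; auto]. }
  pose proof (improving_move_drift P X0 g0 D HP (wf_population_valid n P X0 HI Hin) HX0).
  pose proof (sumR_mono_slack P _ (fun _ => potential P) X0 (INR (S n)) Hin Hgen ltac:(lra)) as Hs.
  rewrite sumR_const in Hs. pose proof (le_INR _ _ (wf_population_size n P HI)).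
  assert (HL : 0 < INR (length P)) by (destruct P; [congruence | apply lt_0_INR; simpl; lia]).
  apply Rmult_le_compat_l with (r := / INR (length P)) in Hs; [|left; apply Rinv_0_lt_compat; auto].
  rewrite Rmult_plus_distr_l, <- Rmult_assoc, Rinv_l in Hs by lra.
  assert (1 <= / INR (length P) * INR (S n)).
  { rewrite <- (Rinv_l (INR (length P))) by lra. apply Rmult_le_compat_l; auto.
    left; apply Rinv_0_lt_compat; auto. }
  lra.
Qed.
End Potential.

(** * Additive drift: the expected time is at most the initial potential *)

Section AdditiveDrift.
Variables (alg : algorithm) (n : nat).
Hypothesis n_pos : (1 <= n)%nat.

Lemma surv_0 P : surv alg n 0 P = if excluded_middle_informative (covers_front n P) then 0 else 1.
Proof. reflexivity. Qed.

Lemma surv_S t P : surv alg n (S t) P =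
  if excluded_middle_informative (covers_front n P) then 0 else
  / INR (length P) * sumR (fun X => mutation alg n X (fun Y => surv alg n t (smo_update P Y))) P.
Proof. reflexivity. Qed.

Lemma surv_covered t P : covers_front n P -> surv alg n t P = 0.
Proof. intros H. destruct t; [rewrite surv_0 | rewrite surv_S]; destruct excluded_middle_informative; tauto. Qed.

Lemma surv_range t : forall P, wf_population n P -> 0 <= surv alg n t P <= 1.
Proof.
  induction t; intros P HI.
  - rewrite surv_0. destruct excluded_middle_informative; lra.
  - rewrite surv_S. destruct excluded_middle_informative; [lra|].
    apply average_bound; [apply HI|]. intros X HX.
    apply (mutation_range alg n X n_pos (wf_population_valid n P X HI HX)).
    intros Y HY. apply IHt, smo_update_wf; auto.
Qed.

(* [partial_time t P] = sum of P(T > s) for s < t, i.e. E[min(T, t)] from population P. *)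
Fixpoint partial_time (t : nat) (P : list tree) : R :=
  match t with O => 0 | S t' => partial_time t' P + surv alg n t' P end.

Lemma partial_time_range t : forall P, wf_population n P -> 0 <= partial_time t P <= INR t.
Proof.
  induction t; intros P HI; cbn [partial_time]; [simpl; lra|].
  pose proof (IHt P HI). pose proof (surv_range t P HI). rewrite S_INR. lra.
Qed.

Lemma partial_time_covered t P : covers_front n P -> partial_time t P = 0.
Proof. intros H. induction t; simpl; auto. rewrite IHt, surv_covered; auto; lra. Qed.

Lemma partial_time_bounded t P : wf_population n P -> bounded_on n (fun Y => partial_time t (smo_update P Y)).
Proof. intros HI. exists (INR t). intros Y HY. apply partial_time_range, smo_update_wf; auto. Qed.

Lemma partial_time_step t : forall P, wf_population n P -> ~ covers_front n P ->
  partial_time (S t) P =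
  1 + / INR (length P) * sumR (fun X => mutation alg n X (fun Y => partial_time t (smo_update P Y))) P.
Proof.
  induction t; intros P HI HC.
  - cbn [partial_time]. rewrite surv_0. destruct excluded_middle_informative; [tauto|].
    rewrite (sumR_ext _ _ (fun _ => 0)), sumR_const; [lra|].
    intros X HX. apply mutation_const; [auto | eapply wf_population_valid; eauto | lra].
  - change (partial_time (S (S t)) P) with (partial_time (S t) P + surv alg n (S t) P).
    rewrite IHt, surv_S by auto. destruct excluded_middle_informative; [tauto|].
    rewrite Rplus_assoc, <- Rmult_plus_distr_l, <- sumR_plus. do 2 f_equal.
    apply sumR_ext. intros X HX. symmetry.
    apply mutation_plus; [auto | eapply wf_population_valid; eauto | apply partial_time_bounded; auto |].
    exists 1. intros Y HY. apply surv_range, smo_update_wf; auto.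
Qed.

(* The potential is a supersolution of this recursion, hence dominates every partial sum. *)
Lemma partial_time_le_potential t : forall P, wf_population n P -> partial_time t P <= potential alg n P.
Proof.
  induction t; intros P HI.
  - apply potential_nonneg; auto.
  - destruct (excluded_middle_informative (covers_front n P)) as [HC|HC].
    + rewrite partial_time_covered; auto. apply potential_nonneg; auto.
    + rewrite partial_time_step by auto. eapply Rle_trans; [|apply (potential_drift alg n n_pos P HI HC)].
      apply Rplus_le_compat_l, Rmult_le_compat_l.
      { left; apply Rinv_0_lt_compat. destruct HI as [HP _]. destruct P; [congruence | apply lt_0_INR; simpl; lia]. }
      apply sumR_mono. intros X HX. pose proof (wf_population_valid n P X HI HX) as HXv.
      apply mutation_mono; auto using partial_time_bounded.
      * apply potential_after_bounded; auto. apply HI.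
      * intros Y HY. apply IHt, smo_update_wf; auto.
Qed.

Lemma expected_time_le_potential X0 : valid_tree n X0 ->
  exists E, expected_time_is alg n X0 E /\ E <= potential alg n [X0].
Proof.
  intros HX0. assert (HI : wf_population n [X0]).
  { split; [congruence|]. split; repeat constructor; auto. }
  set (u := fun N => sum_f_R0 (fun t => surv alg n t [X0]) N).
  assert (Hu : forall N, u N = partial_time (S N) [X0]).
  { unfold u. induction N; cbn [sum_f_R0 partial_time] in *; [lra | rewrite IHN; lra]. }
  assert (Hg : Un_growing u).
  { intros N. unfold u. cbn [sum_f_R0]. pose proof (surv_range (S N) [X0] HI). lra. }
  assert (Hub : forall N, u N <= potential alg n [X0]) by (intros; rewrite Hu; apply partial_time_le_potential; auto).
  destruct (growing_cv u Hg) as [l Hl]; [exists (potential alg n [X0]); intros x [N ->]; auto|].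
  exists l. split; [exact Hl|].
  apply (@Rle_cv_lim u (fun _ => potential alg n [X0])); auto.
  intros eps He. exists 0%nat. intros. unfold Rdist. rewrite Rminus_diag, Rabs_R0. lra.
Qed.
End AdditiveDrift.

(** * Bounding the initial potential *)

Definition harmonic (n : nat) : R := sumR (fun m => / INR (n - m)) (seq 0 n).

Lemma harmonic_S n : harmonic (S n) = / INR (S n) + harmonic n.
Proof.
  unfold harmonic. change (seq 0 (S n)) with (0%nat :: seq 1 n). rewrite <- seq_shift.
  simpl sumR at 1. rewrite sumR_map. reflexivity.
Qed.

(* 1/(x+1) <= ln(x+1) - ln x, from 1 + ln y <= y at y = x/(x+1). *)
Lemma ln_step x : 0 < x -> ln x + / (x + 1) <= ln (x + 1).
Proof.
  intros Hx. assert (H : 1 + ln (x / (x + 1)) <= x / (x + 1)).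
  { pose proof (exp_ineq1_le (ln (x / (x + 1)))) as H. rewrite exp_ln in H; auto.
    apply Rdiv_lt_0_compat; lra. }
  unfold Rdiv in H. rewrite ln_mult, ln_Rinv in H by (try apply Rinv_0_lt_compat; lra).
  assert (x / (x + 1) = 1 - / (x + 1)) by (field; lra). unfold Rdiv in *. lra.
Qed.

Lemma harmonic_le_ln n : (1 <= n)%nat -> harmonic n <= 1 + ln (INR n).
Proof.
  induction n; intros H; [lia|]. destruct (Nat.eq_dec n 0) as [->|Hn0].
  - unfold harmonic. simpl. rewrite ln_1. lra.
  - rewrite harmonic_S, S_INR. specialize (IHn ltac:(lia)).
    pose proof (ln_step (INR n) ltac:(apply lt_0_INR; lia)). lra.
Qed.

Lemma ln_monotone x y : 0 < x -> x <= y -> ln x <= ln y.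
Proof. intros Hx [H|H]; [left; apply ln_increasing; auto | right; subst; auto]. Qed.

Lemma ln_INR_nonneg n : (1 <= n)%nat -> 0 <= ln (INR n).
Proof. intros H. rewrite <- ln_1. apply ln_monotone; [lra | apply (le_INR 1); auto]. Qed.

(* n^2 = O(n^2 log n + 1), using ln n >= 1 for n >= 3 and checking n = 1, 2. *)
Lemma sq_le_sq_ln n : (1 <= n)%nat -> INR n ^ 2 <= 2 * (INR n ^ 2 * ln (INR n) + 1).
Proof.
  intros H. destruct (le_lt_dec 3 n) as [H3|H3].
  - assert (1 <= ln (INR n)).
    { rewrite <- (ln_exp 1). pose proof exp_le_3. apply le_INR in H3. simpl in H3.
      apply ln_monotone; [apply exp_pos | lra]. }
    pose proof (pow2_ge_0 (INR n)). nra.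
  - destruct n as [|[|[|]]]; try lia.
    + simpl. rewrite ln_1. lra.
    + replace (INR 2) with 2 by (simpl; lra). pose proof ln_lt_2. lra.
Qed.

Lemma full_front_potential_harmonic alg n :
  full_front_potential alg n = 6 * INR n * INR (S n) / first_step_weight alg * harmonic n.
Proof.
  unfold full_front_potential, harmonic. rewrite <- sumR_scal. apply sumR_ext. intros m _.
  unfold level_gain. unfold Rdiv. rewrite Rinv_mult. ring.
Qed.

Lemma potential_singleton alg n X0 :
  potential alg n [X0] <= shrink_gain alg n * INR (cplx X0) + full_front_potential alg n.
Proof.
  unfold potential. pose proof (front_potential_range alg n [X0]).
  destruct has_front_point; [|unfold min_cplx; simpl; rewrite Nat.min_id; lra].
  pose proof (shrink_gain_pos alg n). pose proof (pos_INR (cplx X0)).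
  assert (0 <= shrink_gain alg n * INR (cplx X0)) by (apply Rmult_le_pos; lra). lra.
Qed.

(* A(n) <= 18 n and 6 n (n+1) / q <= 36 n^2, since 1/q <= 3; H_n <= 1 + ln n. *)
Lemma initial_potential_bound alg n X0 : (1 <= n)%nat ->
  potential alg n [X0] <= 108 * (INR n * INR (cplx X0) + INR n ^ 2 * ln (INR n) + 1).
Proof.
  intros Hn1. pose proof (potential_singleton alg n X0) as HV.
  rewrite full_front_potential_harmonic in HV. unfold shrink_gain in HV.
  pose proof (first_step_weight_ge alg) as Hq.
  assert (Hiq : / first_step_weight alg <= 3) by (rewrite <- (Rinv_inv 3); apply Rinv_le_contravar; lra).
  assert (Hiq0 : 0 < / first_step_weight alg) by (apply Rinv_0_lt_compat; lra).
  pose proof (harmonic_le_ln n Hn1). pose proof (ln_INR_nonneg n Hn1). pose proof (sq_le_sq_ln n Hn1).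
  assert (0 <= harmonic n).
  { apply sumR_nonneg. intros m Hm. apply in_seq in Hm. apply Rlt_le, Rinv_0_lt_compat, lt_0_INR. lia. }
  unfold Rdiv in HV. rewrite S_INR in HV.
  set (x := INR n) in *. set (C := INR (cplx X0)) in *. set (L := ln x) in *.
  set (iq := / first_step_weight alg) in *.
  assert (Hx : 1 <= x) by (unfold x; apply (le_INR 1) in Hn1; simpl in Hn1; lra).
  assert (0 <= C) by apply pos_INR.
  assert (3 * (x + 1) * iq * C <= 18 * x * C) by (apply Rmult_le_compat_r; nra).
  assert (6 * x * (x + 1) * iq * harmonic n <= 36 * x ^ 2 * (1 + L)) by (apply Rmult_le_compat; nra).
  assert (0 <= x ^ 2 * L) by (apply Rmult_le_pos; auto; apply pow2_ge_0).
  nra.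
Qed.

Theorem theorem4 :
  forall alg : algorithm,
  exists c : R, 0 < c /\
    forall (n : nat) (X0 : tree),
      (1 <= n)%nat -> valid_tree n X0 ->
      exists E : R,
        expected_time_is alg n X0 E /\
        E <= c * (INR n * INR (cplx X0) + INR n ^ 2 * ln (INR n) + 1).
Proof.
  intros alg. exists 108. split; [lra|]. intros n X0 Hn HX0.
  destruct (expected_time_le_potential alg n Hn X0 HX0) as [E [HE Hbound]].
  exists E. split; auto. eapply Rle_trans; [exact Hbound | apply initial_potential_bound; auto].
Qed.
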